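(* Let $f$ be a Stokes vector field and $K$ a Mueller transform field, with rotation forms $\mathbf f$ and $\mathbf K$ respectively. Then the rotation form $\mathbf g$ of the Stokes vector field $K_{\mathcal F}[f]$ is given, for all $R_o\in SO(3)$, by $$\mathbf g(R_o)=\frac{1}{2\pi}\int_{SO(3)}\mathbf K(R_i,R_o)\,\mathbf f(R_i)\,dR_i.$$
   Context: Fix a right-handed orthonormal global frame $F_g=[\hat x_g,\hat y_g,\hat z_g]$ of $\mathbb R^3$; $S^2$ is the unit sphere with solid-angle measure $d\hat\omega$. A local frame at $\hat\omega$ is a right-handed orthonormal frame $F$ whose third axis is $\hat\omega$. A rotation $R$ acts on frames by $RF$ (rotating each axis). Stokes space. $\mathcal S_{\hat\omega}$ consists of classes $[\mathbf s]_F$ ($\mathbf s\in\mathbb R^4$, $F$ a local frame at $\hat\omega$) with $(\mathbf s,F)\sim(C(\vartheta)\mathbf s,F')$, where $F'$ is $F$ rotated by $\vartheta$ about $\hat\omega$. Here $C(\vartheta)$ is the identity on coordinates 0, 3 and acts on coordinates $(1,2)$ by $\begin{pmatrix}\cos2\vartheta&\sin2\vartheta\\-\sin2\vartheta&\cos2\vartheta\end{pmatrix}$. $[s]^F$ denotes the component vector of $s$ with respect to $F$. A Stokes vector field $f$ assigns $f(\hat\omega)\in\mathcal S_{\hat\omega}$ to each $\hat\omega$. Mueller transform fields. A Mueller transform field $K$ assigns to each $(\hat\omega_i,\hat\omega_o)$ a real linear map $K(\hat\omega_i,\hat\omega_o):\mathcal S_{\hat\omega_i}\to\mathcal S_{\hat\omega_o}$.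 Its Mueller matrix $[N]^{F_i\to F_o}$ is defined by $[Ns]^{F_o}=[N]^{F_i\to F_o}[s]^{F_i}$. The induced operator is $K_{\mathcal F}[f](\hat\omega_o)=\int_{S^2}K(\hat\omega_i,\hat\omega_o)f(\hat\omega_i)d\hat\omega_i$. Rotation forms. The rotation form of a Stokes vector field $f$ is $\mathbf f:SO(3)\to\mathbb R^4$, $\mathbf f(R)=[f(R\hat z_g)]^{RF_g}$. The rotation form of $K$ is $\mathbf K:SO(3)\times SO(3)\to\mathbb R^{4\times4}$, $\mathbf K(R_i,R_o)=[K(R_i\hat z_g,R_o\hat z_g)]^{R_iF_g\to R_oF_g}$. Measure on $SO(3)$. $\int_{SO(3)}h(R)\,dR=\int_0^{2\pi}\int_0^\pi\int_0^{2\pi}h(R_{\hat z_g}(\alpha)R_{\hat y_g}(\beta)R_{\hat z_g}(\gamma))\sin\beta\,d\alpha\,d\beta\,d\gamma$, where $R_{\hat u}(t)$ is rotation by angle $t$ about the axis $\hat u$. *)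

From HB Require Import structures.
From mathcomp Require Import all_boot all_order all_algebra.
From mathcomp Require Import all_classical all_reals all_analysis.
Set Implicit Arguments. Unset Strict Implicit. Unset Printing Implicit Defensive.
Import Order.TTheory GRing.Theory Num.Theory.
Import numFieldNormedType.Exports.
Local Open Scope classical_set_scope.
Local Open Scope ring_scope.

Section Defs.
Variable R : realType.

(* Vectors of R^3 are column vectors in coordinates w.r.t. the global frame
   F_g; a frame [x;y;z] is the 3x3 matrix whose columns are its axes.
   Hence F_g is the identity matrix and R F = R *m F. *)
Definition vec3 := 'cV[R]_3.
Definition frame := 'M[R]_3.
Definition coord (u : vec3) (k : nat) : R := u (inord k) 0.

Definition Fg : frame := 1%:M.
Definition ex : vec3 := \col_(i < 3) (if (i : nat) == 0%N then 1 else 0).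
Definition ey : vec3 := \col_(i < 3) (if (i : nat) == 1%N then 1 else 0).
Definition ez : vec3 := \col_(i < 3) (if (i : nat) == 2%N then 1 else 0).

Definition on_sphere (w : vec3) : bool := \sum_(i < 3) (w i 0) ^+ 2 == 1.

Definition is_frame (F : frame) : bool := (F^T *m F == 1%:M) && (\det F == 1).
Definition is_rot (Q : 'M[R]_3) : bool := (Q^T *m Q == 1%:M) && (\det Q == 1).
Definition axis3 (F : frame) : vec3 := col (inord 2) F.
Definition local_frame (w : vec3) (F : frame) : bool :=
  is_frame F && (axis3 F == w).

(* rotation by angle t about the (unit) axis u : Rodrigues' formula *)
Definition crossmx (u : vec3) : 'M[R]_3 :=
  \matrix_(i < 3, j < 3)
    match (i : nat), (j : nat) with
    | 0, 1 => - coord u 2 | 0, 2 => coord u 1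
    | 1, 0 => coord u 2   | 1, 2 => - coord u 0
    | 2, 0 => - coord u 1 | 2, 1 => coord u 0
    | _, _ => 0 end.
Definition rotmx (u : vec3) (t : R) : 'M[R]_3 :=
  cos t *: 1%:M + sin t *: crossmx u + (1 - cos t) *: (u *m u^T).

Definition Cmx (t : R) : 'M[R]_4 :=
  \matrix_(i < 4, j < 4)
    match (i : nat), (j : nat) with
    | 0, 0 => 1 | 3, 3 => 1
    | 1, 1 => cos (2 * t) | 1, 2 => sin (2 * t)
    | 2, 1 => - sin (2 * t) | 2, 2 => cos (2 * t)
    | _, _ => 0 end.

(* An element of the Stokes space S_w (an equivalence class [s]_F) is
   represented by its component map F |-> [s]^F on local frames at w
   (and 0 on other matrices).  The class relation (s,F) ~ (C(t) s, F')
   with F' = F rotated by t about w is the transformation law below. *)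
Definition stokes_elt := frame -> 'cV[R]_4.
Definition is_stokes (w : vec3) (x : stokes_elt) : Prop :=
  (forall F t, local_frame w F -> x (rotmx w t *m F) = Cmx t *m x F) /\
  (forall F, ~~ local_frame w F -> x F = 0).

Definition stokes_field (f : vec3 -> stokes_elt) : Prop :=
  forall w, on_sphere w -> is_stokes w (f w).

Definition mueller_field (K : vec3 -> vec3 -> stokes_elt -> stokes_elt) : Prop :=
  forall wi wo, on_sphere wi -> on_sphere wo ->
    (forall x, is_stokes wi x -> is_stokes wo (K wi wo x)) /\
    (forall (a : R) x y, is_stokes wi x -> is_stokes wi y ->
       K wi wo (fun F => a *: x F + y F) =
       (fun F => a *: K wi wo x F + K wi wo y F)).

Definition is_mueller_matrix (N : stokes_elt -> stokes_elt) (wi : vec3)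
  (Fi Fo : frame) (M : 'M[R]_4) : Prop :=
  forall x, is_stokes wi x -> N x Fo = M *m x Fi.

Definition rotform (f : vec3 -> stokes_elt) (Q : 'M[R]_3) : 'cV[R]_4 :=
  f (Q *m ez) (Q *m Fg).

Definition is_rotform_K (K : vec3 -> vec3 -> stokes_elt -> stokes_elt)
  (Kr : 'M[R]_3 -> 'M[R]_3 -> 'M[R]_4) : Prop :=
  forall Ri Ro, is_rot Ri -> is_rot Ro ->
    is_mueller_matrix (K (Ri *m ez) (Ro *m ez)) (Ri *m ez) (Ri *m Fg) (Ro *m Fg)
      (Kr Ri Ro).

Definition leb := (@lebesgue_measure R).

Definition sph (a b : R) : vec3 :=
  \col_(i < 3) match (i : nat) with
               | 0 => sin b * cos a | 1 => sin b * sin a | _ => cos b end.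

Definition S2int (h : vec3 -> R) : R :=
  Rintegral leb `[0, pi]
    (fun b => Rintegral leb `[0, 2 * pi] (fun a => h (sph a b) * sin b)).

Definition SO3int (h : 'M[R]_3 -> R) : R :=
  Rintegral leb `[0, 2 * pi] (fun c =>
  Rintegral leb `[0, pi] (fun b =>
  Rintegral leb `[0, 2 * pi] (fun a =>
    h (rotmx ez a *m rotmx ey b *m rotmx ez c) * sin b))).

Definition SO3intv (H : 'M[R]_3 -> 'cV[R]_4) : 'cV[R]_4 :=
  \col_(k < 4) SO3int (fun Q => H Q k 0).

(* the induced operator K_F[f]; the integral of the S_wo-valued function
   is taken componentwise in each local frame F at wo. *)
Definition KF (K : vec3 -> vec3 -> stokes_elt -> stokes_elt)
  (f : vec3 -> stokes_elt) (wo : vec3) : stokes_elt :=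
  fun F => if local_frame wo F then
             \col_(k < 4) S2int (fun wi => K wi wo (f wi) F k 0)
           else 0.

End Defs.

(* Write w_i = R_i z_g.  Since the rotation form of K consists of the Mueller
   matrices of K(w_i, w_o) between the frames R_i F_g and R_o F_g, the integrand
   K(R_i, R_o) f(R_i) is the component in R_o F_g of K(w_i, w_o) f(w_i), a
   function of w_i alone.  In Euler angles R_i = R_z(a) R_y(b) R_z(c) the last
   factor fixes z_g, so w_i is the point of S^2 with azimuth a and polar angle b,
   independently of c: the c-integral contributes a factor 2 pi and what remains
   is the solid-angle integral defining K_F[f]. *)

From Pilot Require Import Defs.
From HB Require Import structures.
From mathcomp Require Import all_boot all_order all_algebra.
From mathcomp Require Import all_classical all_reals all_analysis.
From mathcomp Require Import ring lra.
Set Implicit Arguments.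
Unset Strict Implicit.

Import Order.TTheory GRing.Theory Num.Theory.
Import numFieldNormedType.Exports.
Local Open Scope ring_scope.

Ltac expand_mx := rewrite ?big_ord_recr ?big_ord0 /= ?mxE.

Section Determinants.
Variable R : comNzRingType.

Lemma det_mx22 (A : 'M[R]_2) : \det A = A 0 0 * A 1 1 - A 0 1 * A 1 0.
Proof.
rewrite (expand_det_row _ ord0) !big_ord_recr big_ord0 /= add0r /cofactor.
rewrite !det_mx11 !mxE /=.
pose a (i j : nat) := A (inord i) (inord j).
have AE i j : A i j = a i j by rewrite /a !inord_val.
by rewrite !AE /a /= /bump /= expr0 expr1; ring.
Qed.

Lemma det_mx33 (A : 'M[R]_3) : \det A =
  A 0 0 * (A 1 1 * A 2 2 - A 1 2 * A 2 1)
  - A 0 1 * (A 1 0 * A 2 2 - A 1 2 * A 2 0)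
  + A 0 2 * (A 1 0 * A 2 1 - A 1 1 * A 2 0).
Proof.
rewrite (expand_det_row _ ord0) !big_ord_recr big_ord0 /= add0r /cofactor.
rewrite !det_mx22 !mxE /=.
pose a (i j : nat) := A (inord i) (inord j).
have AE i j : A i j = a i j by rewrite /a !inord_val.
by rewrite !AE /a /= /bump /= expr0 expr1 expr2; ring.
Qed.

End Determinants.

Section Rotations.
Variable R : realType.

Lemma on_sphereE (w : vec3 R) : on_sphere w = (w^T *m w == 1%:M).
Proof.
rewrite /on_sphere; apply/eqP/eqP => [w1 | /matrixP /(_ 0 0)].
  apply/matrixP => i j; rewrite !ord1 !mxE eqxx mulr1n -w1.
  by apply: eq_bigr => k _; rewrite mxE expr2.
by rewrite !mxE eqxx mulr1n => <-; apply: eq_bigr => k _; rewrite mxE expr2.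
Qed.

Lemma on_sphere_ez : on_sphere (ez R).
Proof. by apply/eqP; expand_mx => /=; rewrite expr0n expr1n !add0r. Qed.

Lemma on_sphere_rot (Q : 'M[R]_3) (w : vec3 R) :
  is_rot Q -> on_sphere w -> on_sphere (Q *m w).
Proof.
move=> /andP[/eqP QTQ _]; rewrite !on_sphereE.
by rewrite trmx_mul mulmxA -(mulmxA w^T) QTQ mulmx1.
Qed.

Lemma is_rot_mul (A B : 'M[R]_3) : is_rot A -> is_rot B -> is_rot (A *m B).
Proof.
move=> /andP[/eqP ATA /eqP detA] /andP[/eqP BTB /eqP detB]; apply/andP; split.
  by rewrite trmx_mul mulmxA -(mulmxA B^T) ATA mulmx1 BTB.
by rewrite det_mulmx detA detB mulr1.
Qed.

Lemma rotmx_axis (u : vec3 R) t : on_sphere u -> rotmx u t *m u = u.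
Proof.
rewrite on_sphereE => /eqP uTu.
have cross_u : crossmx u *m u = 0.
  have uE (i : 'I_3) : u i 0 = Defs.coord u i by rewrite /Defs.coord inord_val.
  apply/matrixP => i j; rewrite !ord1 !mxE; expand_mx; rewrite !uE /=.
  by case: i => [[|[|[|//]]] Hi] /=; ring.
rewrite /rotmx !mulmxDl -!scalemxAl cross_u -mulmxA uTu mul1mx mulmx1.
by rewrite scaler0 addr0 -scalerDl addrC subrK scale1r.
Qed.

Definition mx3 (l : seq (seq R)) : 'M[R]_3 :=
  \matrix_(i < 3, j < 3) nth 0 (nth [::] l i) j.

Lemma rotmx_ezE a : rotmx (ez R) a =
  mx3 [:: [:: cos a; - sin a; 0]; [:: sin a; cos a; 0]; [:: 0; 0; 1]].
Proof.
apply/matrixP => i j; rewrite /rotmx /crossmx /Defs.coord !mxE; expand_mx.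
by case: i => [[|[|[|//]]] Hi]; case: j => [[|[|[|//]]] Hj] /=;
  rewrite ?mxE ?inordK //=; ring.
Qed.

Lemma rotmx_eyE a : rotmx (ey R) a =
  mx3 [:: [:: cos a; 0; sin a]; [:: 0; 1; 0]; [:: - sin a; 0; cos a]].
Proof.
apply/matrixP => i j; rewrite /rotmx /crossmx /Defs.coord !mxE; expand_mx.
by case: i => [[|[|[|//]]] Hi]; case: j => [[|[|[|//]]] Hj] /=;
  rewrite ?mxE ?inordK //=; ring.
Qed.

Lemma is_rot_rotmx_ez a : is_rot (rotmx (ez R) a).
Proof.
have c2s2 := cos2sin2 a; rewrite rotmx_ezE; apply/andP; split; apply/eqP.
  apply/matrixP => i j; rewrite !mxE; expand_mx.
  by case: i => [[|[|[|//]]] Hi]; case: j => [[|[|[|//]]] Hj] /=; expand_mx; nra.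
by rewrite det_mx33 !mxE /=; nra.
Qed.

Lemma is_rot_rotmx_ey a : is_rot (rotmx (ey R) a).
Proof.
have c2s2 := cos2sin2 a; rewrite rotmx_eyE; apply/andP; split; apply/eqP.
  apply/matrixP => i j; rewrite !mxE; expand_mx.
  by case: i => [[|[|[|//]]] Hi]; case: j => [[|[|[|//]]] Hj] /=; expand_mx; nra.
by rewrite det_mx33 !mxE /=; nra.
Qed.

Definition euler (a b c : R) : 'M[R]_3 :=
  rotmx (ez R) a *m rotmx (ey R) b *m rotmx (ez R) c.

Lemma is_rot_euler a b c : is_rot (euler a b c).
Proof. by rewrite /euler !is_rot_mul ?is_rot_rotmx_ez ?is_rot_rotmx_ey. Qed.

Lemma euler_ez a b c : euler a b c *m ez R = sph a b.
Proof.
rewrite /euler -mulmxA rotmx_axis ?on_sphere_ez // rotmx_ezE rotmx_eyE.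
apply/matrixP => i j; rewrite !mxE.
by case: i => [[|[|[|//]]] Hi];
  rewrite ?(mxE, big_ord_recr, big_ord0) /widen_ord /ord_max /=; ring.
Qed.

Lemma local_frame_rot (Q : 'M[R]_3) : is_rot Q -> local_frame (Q *m ez R) Q.
Proof.
move=> rotQ; apply/andP; split; first exact: rotQ.
apply/eqP/matrixP => i j.
rewrite /axis3 !mxE; expand_mx; rewrite !mulr0 mulr1 !add0r.
by congr (Q _ _); apply/val_inj; rewrite /= inordK.
Qed.

End Rotations.

Lemma Rintegral_cst_itv (R : realType) (x r : R) :
  0 <= x -> Rintegral (@leb R) `[0, x]%classic (fun=> r) = r * x.
Proof.
move=> x_ge0; rewrite Rintegral_cst ?measurable_itv //.
have := lebesgue_measure_itv `[0, x]%R; rewrite /= lte_fin => ->.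
case: ltrP => [_ | x_le0]; first by rewrite /= oppr0 addr0.
have -> : x = 0 by apply/le_anti; rewrite x_le0 x_ge0.
by rewrite mulr0.
Qed.

Lemma SO3int_axis (R : realType) (g : 'M[R]_3 -> R) (h : vec3 R -> R) :
  (forall Q, is_rot Q -> g Q = h (Q *m ez R)) -> SO3int g = 2 * pi * S2int h.
Proof.
move=> gE; rewrite mulrC -(@Rintegral_cst_itv R (2 * pi)); last first.
  by rewrite mulr_ge0 ?pi_ge0.
apply: eq_Rintegral => c _; apply: eq_Rintegral => b _.
by apply: eq_Rintegral => a _; rewrite gE ?is_rot_euler // euler_ez.
Qed.

Lemma rotform_mueller (R : realType) f K Kr (Ri Ro : 'M[R]_3) :
  stokes_field f -> is_rotform_K K Kr -> is_rot Ri -> is_rot Ro ->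
  Kr Ri Ro *m rotform f Ri = K (Ri *m ez R) (Ro *m ez R) (f (Ri *m ez R)) Ro.
Proof.
move=> stokes_f rotform_K rotRi rotRo.
have := rotform_K _ _ rotRi rotRo (f (Ri *m ez R)); rewrite /Fg mulmx1 => <- //.
by apply: stokes_f; apply: on_sphere_rot; rewrite ?on_sphere_ez.
Qed.

Theorem mainTheorem6 (R : realType) (f : vec3 R -> stokes_elt R)
  (K : vec3 R -> vec3 R -> stokes_elt R -> stokes_elt R)
  (Kr : 'M[R]_3 -> 'M[R]_3 -> 'M[R]_4) :
  stokes_field f -> mueller_field K -> is_rotform_K K Kr ->
  forall Ro : 'M[R]_3, is_rot Ro ->
    rotform (KF K f) Ro =
    (2 * pi)^-1 *: SO3intv (fun Ri => Kr Ri Ro *m rotform f Ri).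
Proof.
move=> stokes_f _ rotform_K Ro rotRo.
rewrite [LHS]/rotform /KF /Fg mulmx1 local_frame_rot //.
apply/matrixP => k j; rewrite !mxE.
rewrite (@SO3int_axis R _ (fun wi => K wi (Ro *m ez R) (f wi) Ro k 0)).
  by rewrite mulKf // mulf_neq0 ?pnatr_eq0 ?gt_eqF ?pi_gt0.
by move=> Q rotQ; rewrite (rotform_mueller stokes_f rotform_K).
Qed.
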